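(* Let A be a rate and window assignment algorithm for the multi-rate fluid model which, for any task system $\tau$ and number of processors $m$, is guaranteed to return some assignment satisfying (S1)–(S5) whenever there exists at least one assignment such that $\theta_{i,j}^H=\theta_i^H$ for all $\tau_i\in\tau_H$ and all $1\le j\le n_H$, $w_j=0$ for all $1\le j\le n_H$, and (S1)–(S5) hold. Then A dominates MC-Fluid (every task system schedulable under MC-Fluid on $m$ processors is schedulable under A on $m$ processors), and A has a speed-up bound of $4/3$.
   Context: Dual-criticality implicit-deadline sporadic task system $\tau$ on $m$ identical processors; each task $\tau_i$ has period/deadline $T_i>0$, criticality in $\{LO,HI\}$, WCETs $C_i^L\le C_i^H$ ($=$ for LO-tasks), $u_i^L=C_i^L/T_i\le1$, $u_i^H=C_i^H/T_i\le1$; $\tau_H$ the HI-tasks, $n_H=|\tau_H|$. A multi-rate assignment consists of LO-mode rates $\theta_i^L\in(0,1]$ ($\tau_i\in\tau$), transition rates $\theta_{i,j}^H\in[0,1]$ and HI rates $\theta_i^H\in(0,1]$ ($\tau_i\in\tau_H$, $1\le j\le n_H$), and window durations $w_j\ge0$. The earliest completion window of $\tau_i\in\tau_H$ is the largest $k_i\in\{1,\dots,n_H+1\}$ with $\sum_{j<k_i}w_j<T_i-C_i^L/\theta_i^L$; $R_i=\theta_{i,k_i}^H$ if $k_i\le n_H$, else $\theta_i^H$; $\theta_{i,n_H+1}^H:=\theta_i^H$. Conditions: (S1) $\theta_i^L\ge u_i^L$ for all $\tau_i\in\tau$; (S2) $\sum_{\tau}\theta_i^L\le m$; (S3) $\sum_{\tau_H}\theta_{i,j}^H\le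 m$ for all $j$ and $\sum_{\tau_H}\theta_i^H\le m$; (S4) for all $\tau_i\in\tau_H$: $\sum_{j<k_i}\theta_{i,j}^Hw_j+R_i(T_i-C_i^L/\theta_i^L-\sum_{j<k_i}w_j)\ge C_i^H-C_i^L$, $\theta_i^L\le\theta_{i,j}^H$ for $k_i\le j\le n_H$, $\theta_i^L\le\theta_i^H$; (S5) for all $\tau_i\in\tau_H$: $\sum_{j<k_i}\theta_{i,j}^Hw_j\ge u_i^H\sum_{j<k_i}w_j$, $\theta_{i,j}^H\le\theta_{i,j+1}^H$ for $1\le j<k_i$, $\theta_{i,j}^H\ge u_i^H$ for $k_i\le j\le n_H$, $\theta_i^H\ge u_i^H$. A task system is schedulable under A if A returns an assignment satisfying (S1)–(S5). MC-Fluid is the dual-rate fluid rate-assignment algorithm of Lee et al.; a task system is schedulable under MC-Fluid exactly when MC-Fluid returns rates $\theta_i^L$ ($\tau_i\in\tau$), $\theta_i^H$ ($\tau_i\in\tau_H$) satisfying: $\theta_i^L\ge u_i^L$ for all $\tau_i\in\tau$; $u_i^L/\theta_i^L+(u_i^H-u_i^L)/\theta_i^H\le1$ and $\theta_i^H\ge\theta_i^L$ for all $\tau_i\in\tau_H$; $\sum_{\tau}\theta_i^L\le m$; $\sum_{\tau_H}\theta_i^H\le m$. It is known from prior work that MC-Fluid has speed-up bound $4/3$. An algorithm has speed-up bound $s$ if every task system that is MC-schedulable by some algorithm on $m$ unit-speed processors (every job receives $C_i^L$ by its deadline in LO-mode and every HI-job receives $C_i^H$ by its deadline in HI-mode) is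 deemed schedulable by the algorithm on $m$ processors of speed $s$. *)

From HB Require Import structures.
From mathcomp Require Import all_boot all_order all_algebra.
Set Implicit Arguments. Unset Strict Implicit. Unset Printing Implicit Defensive.
Import Order.TTheory GRing.Theory Num.Theory.
Local Open Scope ring_scope.

Section MC.
Variable R : realFieldType.

(* A task: period/deadline T, criticality (true = HI), WCETs C^L, C^H. *)
Record task := Task { tk_T : R; tk_hi : bool; tk_CL : R; tk_CH : R }.

Definition uL (t : task) : R := tk_CL t / tk_T t.
Definition uH (t : task) : R := tk_CH t / tk_T t.

Definition valid_task (t : task) : Prop :=
  [/\ 0 < tk_T t, 0 <= tk_CL t, tk_CL t <= tk_CH t,
      (~~ tk_hi t -> tk_CL t = tk_CH t) & uL t <= 1 /\ uH t <= 1].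

Definition valid_system (n : nat) (tau : 'I_n -> task) : Prop :=
  forall i, valid_task (tau i).

Definition nH (n : nat) (tau : 'I_n -> task) : nat := #|[set i | tk_hi (tau i)]|.

(* A multi-rate assignment.  Windows are indexed 0-based: window j (j < nH)
   of the paper is window j.+1.  thT i j is theta^H_{i,j+1}. *)
Record assignment (n : nat) := Assignment {
  thL : 'I_n -> R;
  thT : 'I_n -> nat -> R;
  thH : 'I_n -> R;
  win : nat -> R
}.

Section Assign.
Variables (n : nat) (tau : 'I_n -> task) (m : nat) (a : assignment n).

Let NH := nH tau.

(* theta^H_{i,j+1}, with theta^H_{i,nH+1} := theta^H_i *)
Definition thExt (i : 'I_n) (j : nat) : R :=
  if (j < NH)%N then thT a i j else thH a i.

Definition Dslack (i : 'I_n) : R := tk_T (tau i) - tk_CL (tau i) / thL a i.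

Definition wsum (k : nat) : R := \sum_(j < k) win a j.

(* earliest completion window, 0-based: the paper's k_i is kidx i + 1.
   Largest k in {0..nH} with sum_{j<k} w_j < T_i - C^L_i/theta^L_i
   (defaults to 0 if no such k exists). *)
Definition kidx (i : 'I_n) : nat :=
  \max_(k < NH.+1 | wsum k < Dslack i) (k : nat).

Definition Rrate (i : 'I_n) : R := thExt i (kidx i).

Definition ranges : Prop :=
  [/\ forall i, 0 < thL a i <= 1,
      forall i, tk_hi (tau i) -> forall j, (j < NH)%N -> 0 <= thT a i j <= 1,
      forall i, tk_hi (tau i) -> 0 < thH a i <= 1
    & forall j, (j < NH)%N -> 0 <= win a j].

Definition S1 : Prop := forall i, uL (tau i) <= thL a i.

Definition S2 : Prop := \sum_(i < n) thL a i <= m%:R.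

Definition S3 : Prop :=
  (forall j, (j < NH)%N -> \sum_(i < n | tk_hi (tau i)) thT a i j <= m%:R)
  /\ \sum_(i < n | tk_hi (tau i)) thH a i <= m%:R.

Definition S4 : Prop :=
  forall i, tk_hi (tau i) ->
  [/\ \sum_(j < kidx i) thT a i j * win a j
        + Rrate i * (Dslack i - wsum (kidx i)) >= tk_CH (tau i) - tk_CL (tau i),
      (forall j, (kidx i <= j < NH)%N -> thL a i <= thT a i j)
    & thL a i <= thH a i].

Definition S5 : Prop :=
  forall i, tk_hi (tau i) ->
  [/\ \sum_(j < kidx i) thT a i j * win a j >= uH (tau i) * wsum (kidx i),
      (forall j, (j < kidx i)%N -> thExt i j <= thExt i j.+1),
      (forall j, (kidx i <= j < NH)%N -> uH (tau i) <= thT a i j)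
    & uH (tau i) <= thH a i].

Definition valid_assignment : Prop := ranges /\ [/\ S1, S2, S3, S4 & S5].

Definition dual_rate_shape : Prop :=
  (forall i, tk_hi (tau i) -> forall j, (j < NH)%N -> thT a i j = thH a i)
  /\ (forall j, (j < NH)%N -> win a j = 0).

End Assign.

Definition mr_algorithm := forall n : nat, ('I_n -> task) -> nat -> option (assignment n).

Definition sched_mr (A : mr_algorithm) (n : nat) (tau : 'I_n -> task) (m : nat) : Prop :=
  exists a, A n tau m = Some a /\ valid_assignment tau m a.

(* MC-Fluid (any concrete implementation): returns rates (theta^L, theta^H). *)
Definition fluid_algorithm :=
  forall n : nat, ('I_n -> task) -> nat -> option (('I_n -> R) * ('I_n -> R)).

Definition mcfluid_ok (n : nat) (tau : 'I_n -> task) (m : nat)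
  (thl thh : 'I_n -> R) : Prop :=
  ((forall i, 0 < thl i <= 1) /\ (forall i, tk_hi (tau i) -> 0 < thh i <= 1)) /\
  [/\
      forall i, uL (tau i) <= thl i,
      forall i, tk_hi (tau i) ->
        uL (tau i) / thl i + (uH (tau i) - uL (tau i)) / thh i <= 1
        /\ thl i <= thh i,
      \sum_(i < n) thl i <= m%:R
    & \sum_(i < n | tk_hi (tau i)) thh i <= m%:R].

Definition sched_fluid (F : fluid_algorithm) (n : nat) (tau : 'I_n -> task) (m : nat) : Prop :=
  exists thl thh, F n tau m = Some (thl, thh) /\ mcfluid_ok tau m thl thh.

(* Running on processors of speed s = running the task system with all WCETs
   divided by s on unit-speed processors. *)
Definition scale (s : R) (n : nat) (tau : 'I_n -> task) : 'I_n -> task :=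
  fun i => Task (tk_T (tau i)) (tk_hi (tau i)) (tk_CL (tau i) / s) (tk_CH (tau i) / s).

(* Speed-up bound s of a schedulability test [sched] with respect to the
   (exact, algorithm-independent) MC-schedulability predicate [MCsched]. *)
Definition speedup_bound
  (MCsched sched : forall n : nat, ('I_n -> task) -> nat -> Prop) (s : R) : Prop :=
  forall n (tau : 'I_n -> task) m,
    valid_system tau -> MCsched n tau m -> sched n (scale s tau) m.

End MC.

(* A dual-rate MC-Fluid solution (theta^L, theta^H) is a multi-rate assignment with all
   windows empty and every transition rate equal to theta^H.  Empty windows make the
   earliest completion window irrelevant, so (S4) becomes the fluid budget
   theta^H (T - C^L/theta^L) >= C^H - C^L, i.e. MC-Fluid's condition multiplied by
   T theta^H, and (S5) becomes u^H <= theta^H, which that condition implies since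
   theta^L <= theta^H.  Hence A dominates MC-Fluid, and it inherits the speed-up bound
   4/3 because scaling WCETs down by a speed s >= 1 keeps a task system valid. *)

From HB Require Import structures.
From mathcomp Require Import all_boot all_order all_algebra.
From mathcomp Require Import ring.
Set Implicit Arguments. Unset Strict Implicit. Unset Printing Implicit Defensive.
Import Order.TTheory GRing.Theory Num.Theory.
Local Open Scope ring_scope.

Section FluidArithmetic.
Variable R : realFieldType.

Lemma fluid_budget (T CL CH l h : R) :
  0 < T -> 0 < l -> 0 < h ->
  CL / T / l + (CH / T - CL / T) / h <= 1 -> CH - CL <= h * (T - CL / l).
Proof.
move=> T0 l0 h0; rewrite -subr_ge0 => Hf; rewrite -subr_ge0.
have -> : h * (T - CL / l) - (CH - CL)
          = T * h * (1 - (CL / T / l + (CH / T - CL / T) / h)).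
  by field; rewrite ?gt_eqF.
by rewrite mulr_ge0 // mulr_ge0 // ltW.
Qed.

Lemma fluid_high_rate_ge (u v l h : R) :
  0 <= u -> 0 < l -> l <= h -> u / l + (v - u) / h <= 1 -> v <= h.
Proof.
move=> u0 l0 lh Hf; have h0 : 0 < h by apply: lt_le_trans lh.
have ul : u / h <= u / l by rewrite ler_wpM2l // lef_pV2.
rewrite -[h in v <= h]mul1r -ler_pdivrMr //; apply: le_trans Hf.
by rewrite -[v in v / h](subrK u) addrC mulrDl lerD2r.
Qed.

End FluidArithmetic.

Lemma valid_system_scale (R : realFieldType) (s : R) n (tau : 'I_n -> task R) :
  1 <= s -> valid_system tau -> valid_system (scale s tau).
Proof.
move=> s1 Hv i; have [T0 CL0 CLH Hlo [uL1 uH1]] := Hv i.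
have s0 : 0 < s by apply: lt_le_trans s1.
have shrink x : 0 <= x -> x / s <= x.
  by move=> x0; rewrite ler_pdivrMr // ler_peMr.
have ushrink C : 0 <= C -> C / s / tk_T (tau i) <= C / tk_T (tau i).
  by move=> C0; apply: ler_wpM2r; [rewrite invr_ge0 ltW | exact: shrink].
have CH0 : 0 <= tk_CH (tau i) by apply: le_trans CLH.
rewrite /valid_task /uL /uH /=; split => //.
- by rewrite divr_ge0 // ltW.
- by rewrite ler_pM2r ?invr_gt0.
- by move=> /Hlo ->.
- by split; [apply: le_trans uL1; exact: ushrink | apply: le_trans uH1; exact: ushrink].
Qed.

Definition dual_rate_assignment (R : realFieldType) n (thl thh : 'I_n -> R) :
  assignment R n := Assignment thl (fun i _ => thh i) thh (fun _ => 0).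

Section DualRate.
Variables (R : realFieldType) (n : nat) (tau : 'I_n -> task R) (m : nat).
Variables (thl thh : 'I_n -> R).
Hypothesis tau_valid : valid_system tau.
Hypothesis fluid_ok : mcfluid_ok tau m thl thh.

Let a := dual_rate_assignment thl thh.

Lemma dual_rate_assignment_shape : dual_rate_shape tau a.
Proof. by []. Qed.

Lemma wsum_dual_rate k : wsum a k = 0.
Proof. exact: big1. Qed.

Lemma transition_work_dual_rate i k : \sum_(j < k) thT a i j * win a j = 0.
Proof. by rewrite big1 // => j _; rewrite mulr0. Qed.

Lemma thExt_dual_rate i j : thExt tau a i j = thh i.
Proof. by rewrite /thExt; case: ifP. Qed.

Lemma dual_rate_assignment_valid : valid_assignment tau m a.
Proof.
have [[Hl Hh] [S1f S4f S2f S3f]] := fluid_ok.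
have rates i : tk_hi (tau i) -> [/\ 0 < thl i, 0 < thh i & thl i <= thh i].
  by move=> hi; case/andP: (Hl i) => ? _; case/andP: (Hh i hi) => ? _; case: (S4f i hi).
split; first split.
- exact: Hl.
- by move=> i hi j _; case/andP: (Hh i hi) => /ltW -> ->.
- exact: Hh.
- by [].
split=> //.
- move=> i hi; have [l0 h0 lh] := rates i hi; have [T0 _ _ _ _] := tau_valid i.
  rewrite transition_work_dual_rate wsum_dual_rate /Rrate thExt_dual_rate subr0 add0r.
  split=> //; apply: fluid_budget => //; exact: (S4f i hi).1.
- move=> i hi; have [l0 _ lh] := rates i hi; have [T0 CL0 _ _ _] := tau_valid i.
  have uL0 : 0 <= uL (tau i) by rewrite divr_ge0 // ltW.
  have uHh : uH (tau i) <= thh i by apply: fluid_high_rate_ge uL0 l0 lh (S4f i hi).1.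
  rewrite transition_work_dual_rate wsum_dual_rate mulr0.
  by split=> // j; rewrite ?thExt_dual_rate.
Qed.

End DualRate.

Theorem lemma3 (R : realFieldType)
  (MCsched : forall n : nat, ('I_n -> task R) -> nat -> Prop)
  (MCFluid : fluid_algorithm R)
  (MCFluid_speedup : speedup_bound MCsched (sched_fluid MCFluid) (4 / 3))
  (A : mr_algorithm R)
  (HA : forall n (tau : 'I_n -> task R) (m : nat),
      valid_system tau ->
      (exists a : assignment R n, dual_rate_shape tau a /\ valid_assignment tau m a) ->
      sched_mr A tau m) :
  (forall n (tau : 'I_n -> task R) (m : nat),
      valid_system tau -> sched_fluid MCFluid tau m -> sched_mr A tau m)
  /\ speedup_bound MCsched (sched_mr A) (4 / 3).
Proof.
have dominates n (tau : 'I_n -> task R) m :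
    valid_system tau -> sched_fluid MCFluid tau m -> sched_mr A tau m.
  move=> Hv [thl [thh [_ Hok]]]; apply: HA => //.
  exists (dual_rate_assignment thl thh).
  by split; [exact: dual_rate_assignment_shape | exact: dual_rate_assignment_valid].
split=> // n tau m Hv Hs; apply: dominates; last exact: MCFluid_speedup.
by apply: valid_system_scale Hv; rewrite ler_pdivlMr ?ltr0n // mul1r ler_nat.
Qed.
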